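(* Let $L_1,L_2$ be disjoint first-order languages without function symbols, each containing at least one constant symbol, let $T_1,T_2$ be an $L_1$-theory and an $L_2$-theory, and let $T_{\mathrm{sim}}$ be the theory of simple products of $T_1$ and $T_2$. Let $\mathcal N$ be a monster model of $T_{\mathrm{sim}}$, identified with the standard simple product of a model $\mathcal M_1=(M_1,\ldots)$ of $T_1$ and a model $\mathcal M_2=(M_2,\ldots)$ of $T_2$, so that $N=M_1\times M_2$, and let $\pi_k:N\to M_k$ be the projections. Let $A\subseteq N$ be small and $A_k=\pi_k(A)$. Let $(a_i)_{i\in I}$ and $(b_i)_{i\in I}$ be sequences of elements of $M_1$ and $M_2$ respectively, indexed by a linearly ordered set $I$. Then the sequence $((a_i,b_i))_{i\in I}$ is $A$-indiscernible in $\mathcal N$ if and only if $(a_i)_{i\in I}$ is $A_1$-indiscernible in $\mathcal M_1$ and $(b_i)_{i\in I}$ is $A_2$-indiscernible in $\mathcal M_2$.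
   Context: Language of simple product $L_{\mathrm{sim}}$: constant symbols $C_{(c_1,c_2)}$ for each pair of constants $c_1\in L_1$, $c_2\in L_2$; predicate symbols: those of $L_1$, those of $L_2$, and binary $\sim_1,\sim_2$. $T_\times$ states: $\sim_1,\sim_2$ are equivalence relations; $\forall x\forall y((x\sim_1y)\wedge(x\sim_2y)\to x=y)$; $\forall x\forall y\exists z((x\sim_1z)\wedge(y\sim_2z))$. Standard conversion $\widetilde\phi$ of an $L_k$-formula $\phi$: rewrite atomic formulas with constants as $\exists\bar y(R(\bar y)\wedge\bigwedge t_i=y_i)$; equality of variables $x=y$ becomes $x\sim_k y$; equality with a constant $c\in L_k$ uses $\sim_k$ and $C_{(c,d)}$ (if $k=1$) or $C_{(d,c)}$ (if $k=2$), $d$ a fixed constant of the other language; $R\in L_k$ atomic formulas unchanged; commutes with Boolean connectives and $\exists$. $T_{\mathrm{sim}}$: $T_\times$, all $\widetilde\sigma$ for $\sigma\in T_1\cup T_2$, and for each $k$ and $R\in L_k$, $\forall\bar x\forall\bar y((\bar x\sim_k\bar y)\to(R(\bar x)\leftrightarrow R(\bar y)))$. Standard simple product of $\mathcal M_1,\mathcal M_2$: universe $M_1\times M_2$, $C_{(c_1,c_2)}\mapsto(c_1^{\mathcal M_1},c_2^{\mathcal M_2})$, $x\sim_k y$ iff $\pi_k(x)=\pi_k(y)$, and $R\in L_k$ holds of $\bar c$ iff $\mathcal M_k\models R(\pi_k(\bar c))$. A sequence $(a_i)_{i\in I}$ in a structure is $A$-indiscernible if for every $n$, all $i_1<\cdots<i_n$,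 $j_1<\cdots<j_n$ in $I$ and every formula $\phi(x_1,\ldots,x_n)$ with parameters from $A$, $\phi(a_{i_1},\ldots,a_{i_n})\leftrightarrow\phi(a_{j_1},\ldots,a_{j_n})$ holds. *)

From mathcomp Require Import all_boot.
Set Warnings "-notation-overridden".
Set Implicit Arguments. Unset Strict Implicit. Unset Printing Implicit Defensive.

Record language := Language {
  lcon : Type;
  lrel : Type;
  larity : lrel -> nat }.

Record structure (L : language) := mkStructure {
  sdom : Type;
  scon : lcon L -> sdom;
  srel : forall r : lrel L, ('I_(larity r) -> sdom) -> Prop }.
Arguments sdom {L}. Arguments scon {L}. Arguments srel {L} s r.

Inductive term (L : language) (P : Type) : Type :=
  | TVar : nat -> term L P
  | TCon : lcon L -> term L P
  | TPar : P -> term L P.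

Inductive formula (L : language) (P : Type) : Type :=
  | FRel : forall r : lrel L, ('I_(larity r) -> term L P) -> formula L P
  | FEq : term L P -> term L P -> formula L P
  | FNot : formula L P -> formula L P
  | FAnd : formula L P -> formula L P -> formula L P
  | FEx : nat -> formula L P -> formula L P.

Arguments TVar {L P}. Arguments TCon {L P}. Arguments TPar {L P}.
Arguments FRel {L P}. Arguments FEq {L P}. Arguments FNot {L P}.
Arguments FAnd {L P}. Arguments FEx {L P}.

Definition eval_term (L : language) (P : Type) (M : structure L)
  (pe : P -> sdom M) (v : nat -> sdom M) (t : term L P) : sdom M :=
  match t with
  | TVar n => v n
  | TCon c => scon M c
  | TPar a => pe a
  end.

Fixpoint sat (L : language) (P : Type) (M : structure L)
  (pe : P -> sdom M) (v : nat -> sdom M) (f : formula L P) : Prop :=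
  match f with
  | FRel r ts => srel M r (fun k => eval_term pe v (ts k))
  | FEq t1 t2 => eval_term pe v t1 = eval_term pe v t2
  | FNot g => ~ sat pe v g
  | FAnd g h => sat pe v g /\ sat pe v h
  | FEx n g => exists x : sdom M,
      sat pe (fun m => if m == n then x else v m) g
  end.

Definition term_fv_in (L : language) (P : Type) (S : nat -> Prop)
  (t : term L P) : Prop :=
  match t with TVar n => S n | _ => True end.

Fixpoint fv_in (L : language) (P : Type) (S : nat -> Prop)
  (f : formula L P) : Prop :=
  match f with
  | FRel r ts => forall k, term_fv_in S (ts k)
  | FEq t1 t2 => term_fv_in S t1 /\ term_fv_in S t2
  | FNot g => fv_in S g
  | FAnd g h => fv_in S g /\ fv_in S h
  | FEx n g => fv_in (fun m => m = n \/ S m) g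
  end.

Definition theory (L : language) := formula L Empty_set -> Prop.

Definition no_params (X : Type) (e : Empty_set) : X := match e with end.

Definition models (L : language) (M : structure L) (T : theory L) : Prop :=
  forall phi, T phi -> forall v : nat -> sdom M, sat (@no_params (sdom M)) v phi.

Definition strict_linear_order (I : Type) (lt : I -> I -> Prop) : Prop :=
  (forall x, ~ lt x x) /\
  (forall x y z, lt x y -> lt y z -> lt x z) /\
  (forall x y, x <> y -> lt x y \/ lt y x).

Definition increasing_upto (I : Type) (lt : I -> I -> Prop) (n : nat)
  (i : nat -> I) : Prop :=
  forall k l, k < l < n -> lt (i k) (i l).

Definition indiscernible (L : language) (M : structure L)
  (B : sdom M -> Prop) (I : Type) (lt : I -> I -> Prop) (a : I -> sdom M) : Prop :=
  forall (n : nat) (i j : nat -> I),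
    increasing_upto lt n i -> increasing_upto lt n j ->
    forall phi : formula L {x : sdom M | B x},
      fv_in (fun m => m < n) phi ->
      (sat (@proj1_sig _ _) (fun k => a (i k)) phi <->
       sat (@proj1_sig _ _) (fun k => a (j k)) phi).

(* The language L_sim of simple products: constants C_(c1,c2), the predicate
   symbols of L1 and of L2 (disjoint union), and binary ~1 (true), ~2 (false). *)
Definition sim_arity (L1 L2 : language) (r : (lrel L1 + lrel L2) + bool) : nat :=
  match r with
  | inl (inl p) => larity p
  | inl (inr p) => larity p
  | inr _ => 2
  end.

Definition sim_language (L1 L2 : language) : language :=
  @Language (lcon L1 * lcon L2)%type _ (@sim_arity L1 L2).

Definition sim_rel (L1 L2 : language) (M1 : structure L1) (M2 : structure L2)
  (r : lrel (sim_language L1 L2)) :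
  ('I_(larity r) -> (sdom M1 * sdom M2)%type) -> Prop :=
  match r with
  | inl (inl p) => fun args => srel M1 p (fun k => (args k).1)
  | inl (inr p) => fun args => srel M2 p (fun k => (args k).2)
  | inr true => fun args => (args (@ord0 1)).1 = (args (@ord_max 1)).1
  | inr false => fun args => (args (@ord0 1)).2 = (args (@ord_max 1)).2
  end.

Definition sim_product (L1 L2 : language) (M1 : structure L1) (M2 : structure L2)
  : structure (sim_language L1 L2) :=
  @mkStructure (sim_language L1 L2) (sdom M1 * sdom M2)%type
    (fun c => (scon M1 c.1, scon M2 c.2)) (@sim_rel L1 L2 M1 M2).

Definition proj_set1 (X Y : Type) (A : (X * Y)%type -> Prop) : X -> Prop :=
  fun x => exists y, A y /\ y.1 = x.
Definition proj_set2 (X Y : Type) (A : (X * Y)%type -> Prop) : Y -> Prop :=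
  fun x => exists y, A y /\ y.2 = x.
Arguments indiscernible {L} M B {I} lt a.

(* Every formula of the simple product, with parameters from A, is equivalent
   in M1 x M2 to a finite disjunction of "rectangles" phi(pi_1 x) /\ psi(pi_2 x),
   with phi over A1 in M1 and psi over A2 in M2: atomic formulas already have
   this shape, and rectangle disjunctions are closed under the connectives and
   under existential quantification, since a witness splits into its two
   coordinates.  Indiscernibility of both coordinate sequences therefore
   preserves every rectangle and hence every formula.  Conversely, a constant
   of L2 (resp. L1) lets one translate each L1-formula (resp. L2-formula) into
   the product, reading equality as ~1 (resp. ~2). *)
From mathcomp Require Import all_boot.
From Stdlib Require Import Classical FunctionalExtensionality ClassicalEpsilon.
Set Implicit Arguments. Unset Strict Implicit.
Set Bullet Behavior "Strict Subproofs".

Definition upd (X : Type) (v : nat -> X) (n : nat) (x : X) : nat -> X :=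
  fun m => if m == n then x else v m.

Lemma comp_upd (X Y : Type) (h : X -> Y) (v : nat -> X) n x :
  h \o upd v n x = upd (h \o v) n (h x).
Proof. by apply: functional_extensionality => m; rewrite /upd /=; case: (m == n). Qed.

Definition term_map (L L' : language) (P P' : Type)
    (fc : lcon L -> lcon L') (fp : P -> P') (t : term L P) : term L' P' :=
  match t with
  | TVar n => TVar n
  | TCon c => TCon (fc c)
  | TPar p => TPar (fp p)
  end.

Lemma fv_term_map (L L' : language) (P P' : Type) (fc : lcon L -> lcon L')
    (fp : P -> P') (S : nat -> Prop) (t : term L P) :
  term_fv_in S t -> term_fv_in S (term_map fc fp t).
Proof. by case: t. Qed.

Lemma eval_term_map (L L' : language) (X : structure L) (Y : structure L')
    (P P' : Type) (peX : P -> sdom X) (peY : P' -> sdom Y)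
    (h : sdom X -> sdom Y) (fc : lcon L -> lcon L') (fp : P -> P') :
  (forall c, scon Y (fc c) = h (scon X c)) ->
  (forall p, peY (fp p) = h (peX p)) ->
  forall v t, eval_term peY (h \o v) (term_map fc fp t) = h (eval_term peX v t).
Proof. by move=> hc hp v [n|c|p] /=. Qed.

Definition verum (L : language) (P : Type) : formula L P :=
  FNot (FEx 0 (FNot (FEq (TVar 0) (TVar 0)))).

Lemma sat_verum (L : language) (P : Type) (M : structure L) pe v :
  @sat L P M pe v (verum L P).
Proof. by case=> x; apply. Qed.
Arguments sat_verum {L P M} pe v.

Lemma fv_verum (L : language) (P : Type) (S : nat -> Prop) : fv_in S (verum L P).
Proof. by split; left. Qed.

Section Interpretation.

Variables (L L' : language) (M : structure L) (N : structure L').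
Variables (P P' : Type) (pe : P -> sdom M) (pe' : P' -> sdom N).
Variables (h : sdom N -> sdom M) (h' : sdom M -> sdom N).
Variables (fc : lcon L -> lcon L') (fp : P -> P').
Variable rel_def : forall r : lrel L, ('I_(larity r) -> term L' P') -> formula L' P'.
Variable eq_def : term L' P' -> term L' P' -> formula L' P'.
Hypothesis hK : cancel h' h.
Hypothesis h_con : forall c, h (scon N (fc c)) = scon M c.
Hypothesis h_par : forall p, h (pe' (fp p)) = pe p.
Hypothesis sat_rel_def : forall v r ts,
  sat pe' v (rel_def ts) <-> srel M r (fun k => h (eval_term pe' v (ts k))).
Hypothesis sat_eq_def : forall v t1 t2,
  sat pe' v (eq_def t1 t2) <-> h (eval_term pe' v t1) = h (eval_term pe' v t2).
Hypothesis fv_rel_def : forall S r (ts : 'I_(larity r) -> _),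
  (forall k, term_fv_in S (ts k)) -> fv_in S (rel_def ts).
Hypothesis fv_eq_def : forall S t1 t2,
  term_fv_in S t1 -> term_fv_in S t2 -> fv_in S (eq_def t1 t2).

Fixpoint interpret (f : formula L P) : formula L' P' :=
  match f with
  | FRel r ts => rel_def (term_map fc fp \o ts)
  | FEq t1 t2 => eq_def (term_map fc fp t1) (term_map fc fp t2)
  | FNot g => FNot (interpret g)
  | FAnd g1 g2 => FAnd (interpret g1) (interpret g2)
  | FEx n g => FEx n (interpret g)
  end.

Lemma eval_interpret_term v t :
  h (eval_term pe' v (term_map fc fp t)) = eval_term pe (h \o v) t.
Proof. by case: t. Qed.

Lemma sat_interpret f v : sat pe' v (interpret f) <-> sat pe (h \o v) f.
Proof.
elim: f v => [r ts|t1 t2|g IH|g1 IH1 g2 IH2|n g IH] v /=.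
- rewrite sat_rel_def.
  have -> // : (fun k => h (eval_term pe' v ((term_map fc fp \o ts) k)))
    = (fun k => eval_term pe (h \o v) (ts k)).
  by apply: functional_extensionality => k; apply: eval_interpret_term.
- by rewrite sat_eq_def !eval_interpret_term.
- by rewrite IH.
- by rewrite IH1 IH2.
- split=> -[x Hx].
  + by exists (h x); move/IH: Hx; rewrite comp_upd.
  + by exists (h' x); apply/IH; rewrite comp_upd hK.
Qed.

Lemma fv_interpret S f : fv_in S f -> fv_in S (interpret f).
Proof.
elim: f S => [r ts|t1 t2|g IH|g1 IH1 g2 IH2|n g IH] S /=.
- by move=> Hts; apply: fv_rel_def => k; apply: fv_term_map.
- by case=> H1 H2; apply: fv_eq_def; apply: fv_term_map.
- exact: IH.
- by case=> H1 H2; split; [apply: IH1 | apply: IH2].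
- exact: IH.
Qed.

Lemma sat_iff_interpret S v w :
  (forall psi, fv_in S psi -> (sat pe' v psi <-> sat pe' w psi)) ->
  forall phi, fv_in S phi -> (sat pe (h \o v) phi <-> sat pe (h \o w) phi).
Proof. by move=> Evw phi Hphi; rewrite -!sat_interpret; apply/Evw/fv_interpret. Qed.

End Interpretation.

Section Rectangles.

Variables (L1 L2 : language) (M1 : structure L1) (M2 : structure L2).
Variables (Q1 Q2 : Type) (pe1 : Q1 -> sdom M1) (pe2 : Q2 -> sdom M2).

Definition rectangle := (formula L1 Q1 * formula L2 Q2)%type.

Definition sat_rects (l : seq rectangle) v1 v2 : Prop :=
  foldr (fun R rest => (sat pe1 v1 R.1 /\ sat pe2 v2 R.2) \/ rest) False l.

Definition fv_rects (S : nat -> Prop) (l : seq rectangle) : Prop :=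
  foldr (fun R rest => (fv_in S R.1 /\ fv_in S R.2) /\ rest) True l.

Definition rects_and (l m : seq rectangle) : seq rectangle :=
  [seq (FAnd R.1 R'.1, FAnd R.2 R'.2) | R <- l, R' <- m].

(* not (phi /\ psi) is the disjunction of the rectangles (not phi, T) and (T, not psi). *)
Definition rects_not (l : seq rectangle) : seq rectangle :=
  foldr (fun R rest => rects_and [:: (FNot R.1, verum _ _); (verum _ _, FNot R.2)] rest)
    [:: (verum _ _, verum _ _)] l.

Definition rects_ex (n : nat) (l : seq rectangle) : seq rectangle :=
  [seq (FEx n R.1, FEx n R.2) | R <- l].

Lemma sat_rects_cat l m v1 v2 :
  sat_rects (l ++ m) v1 v2 <-> sat_rects l v1 v2 \/ sat_rects m v1 v2.
Proof. by elim: l => [|R l IH] /=; [tauto | rewrite IH; tauto]. Qed.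

Lemma fv_rects_cat S l m : fv_rects S (l ++ m) <-> fv_rects S l /\ fv_rects S m.
Proof. by elim: l => [|R l IH] /=; [tauto | rewrite IH; tauto]. Qed.

Lemma sat_rects_and l m v1 v2 :
  sat_rects (rects_and l m) v1 v2 <-> sat_rects l v1 v2 /\ sat_rects m v1 v2.
Proof.
elim: l => [|R l IH]; first by rewrite /=; tauto.
rewrite /rects_and allpairs_cons sat_rects_cat -/(rects_and l m) IH /=.
suff -> : sat_rects [seq (FAnd R.1 R'.1, FAnd R.2 R'.2) | R' <- m] v1 v2 <->
  (sat pe1 v1 R.1 /\ sat pe2 v2 R.2) /\ sat_rects m v1 v2 by tauto.
by clear IH; elim: m => [|R' m IHm] /=; [tauto | rewrite IHm; tauto].
Qed.

Lemma fv_rects_and S l m : fv_rects S l -> fv_rects S m -> fv_rects S (rects_and l m).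
Proof.
elim: l => [|R l IH] //= [[HR1 HR2] Hl] Hm.
rewrite /rects_and allpairs_cons fv_rects_cat; split; last exact: IH.
by clear IH; elim: m Hm => [|R' m IHm] //= [[H1 H2] Hm]; tauto.
Qed.

Lemma sat_rects_not l v1 v2 : sat_rects (rects_not l) v1 v2 <-> ~ sat_rects l v1 v2.
Proof.
have T1 := sat_verum pe1 v1; have T2 := sat_verum pe2 v2.
elim: l => [|R l IH] /=; first tauto.
rewrite sat_rects_and IH /=.
have [H1|H1] := classic (sat pe1 v1 R.1); tauto.
Qed.

Lemma fv_rects_not S l : fv_rects S l -> fv_rects S (rects_not l).
Proof.
have V1 := @fv_verum L1 Q1 S; have V2 := @fv_verum L2 Q2 S.
elim: l => [|R l IH] /= => [_|[[H1 H2] Hl]]; first by [].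
by apply: fv_rects_and; last exact: IH.
Qed.

Lemma sat_rects_ex n l v1 v2 :
  sat_rects (rects_ex n l) v1 v2 <->
  exists x : sdom M1 * sdom M2, sat_rects l (upd v1 n x.1) (upd v2 n x.2).
Proof.
elim: l => [|R l IH] /=; first by split=> // -[].
rewrite IH; split.
  case=> [[[x1 H1] [x2 H2]] | [x Hx]]; last by exists x; right.
  by exists (x1, x2); left.
case=> x [[H1 H2] | Hx]; last by right; exists x.
by left; split; [exists x.1 | exists x.2].
Qed.

Lemma fv_rects_ex S n l :
  fv_rects (fun m => m = n \/ S m) l -> fv_rects S (rects_ex n l).
Proof. by elim: l => [|R l IH] //= [HR Hl]; split; last exact: IH. Qed.

Lemma sat_rects_iff S l v1 v2 w1 w2 :
  (forall phi, fv_in S phi -> sat pe1 v1 phi <-> sat pe1 w1 phi) ->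
  (forall psi, fv_in S psi -> sat pe2 v2 psi <-> sat pe2 w2 psi) ->
  fv_rects S l -> (sat_rects l v1 v2 <-> sat_rects l w1 w2).
Proof.
move=> E1 E2; elim: l => [|R l IH] //= [[H1 H2] Hl].
by rewrite (E1 _ H1) (E2 _ H2) (IH Hl).
Qed.

End Rectangles.

Section ProductDecomposition.

Variables (L1 L2 : language) (M1 : structure L1) (M2 : structure L2).
Variables (Q Q1 Q2 : Type) (pe : Q -> sdom M1 * sdom M2).
Variables (pe1 : Q1 -> sdom M1) (pe2 : Q2 -> sdom M2) (q1 : Q -> Q1) (q2 : Q -> Q2).
Hypothesis pe1E : forall p, pe1 (q1 p) = (pe p).1.
Hypothesis pe2E : forall p, pe2 (q2 p) = (pe p).2.

Local Notation LS := (sim_language L1 L2).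
Local Notation N := (sim_product M1 M2).
Local Notation tm1 := (@term_map LS L1 Q Q1 fst q1).
Local Notation tm2 := (@term_map LS L2 Q Q2 snd q2).

Definition rects_of_rel (r : lrel LS) :
    ('I_(larity r) -> term LS Q) -> seq (rectangle L1 L2 Q1 Q2) :=
  match r as r0 return ('I_(sim_arity r0) -> term LS Q) -> _ with
  | inl (inl p) => fun ts => [:: (FRel p (tm1 \o ts), verum _ _)]
  | inl (inr p) => fun ts => [:: (verum _ _, FRel p (tm2 \o ts))]
  | inr true => fun ts => [:: (FEq (tm1 (ts ord0)) (tm1 (ts ord_max)), verum _ _)]
  | inr false => fun ts => [:: (verum _ _, FEq (tm2 (ts ord0)) (tm2 (ts ord_max)))]
  end.

Fixpoint rects_of (f : formula LS Q) : seq (rectangle L1 L2 Q1 Q2) :=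
  match f with
  | FRel r ts => rects_of_rel ts
  | FEq t1 t2 => [:: (FEq (tm1 t1) (tm1 t2), FEq (tm2 t1) (tm2 t2))]
  | FNot g => rects_not (rects_of g)
  | FAnd g1 g2 => rects_and (rects_of g1) (rects_of g2)
  | FEx n g => rects_ex n (rects_of g)
  end.

Lemma eval_tm1 v t : eval_term pe1 (fst \o v) (tm1 t) = (@eval_term LS Q N pe v t).1.
Proof. exact: eval_term_map. Qed.

Lemma eval_tm2 v t : eval_term pe2 (snd \o v) (tm2 t) = (@eval_term LS Q N pe v t).2.
Proof. exact: eval_term_map. Qed.

Lemma sat_rects_of f v :
  @sat LS Q N pe v f <-> sat_rects pe1 pe2 (rects_of f) (fst \o v) (snd \o v).
Proof.
elim: f v => [r ts|t1 t2|g IH|g1 IH1 g2 IH2|n g IH] v /=.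
- have T1 := sat_verum pe1 (fst \o v); have T2 := sat_verum pe2 (snd \o v).
  case: r ts => [[p|p]|[]] ts /=; rewrite ?eval_tm1 ?eval_tm2; try tauto.
  + have -> : (fun k => eval_term pe1 (fst \o v) ((tm1 \o ts) k))
        = (fun k => (@eval_term LS Q N pe v (ts k)).1).
      by apply: functional_extensionality => k; apply: eval_tm1.
    tauto.
  + have -> : (fun k => eval_term pe2 (snd \o v) ((tm2 \o ts) k))
        = (fun k => (@eval_term LS Q N pe v (ts k)).2).
      by apply: functional_extensionality => k; apply: eval_tm2.
    tauto.
- rewrite !eval_tm1 !eval_tm2 -pair_equal_spec -!surjective_pairing; tauto.
- by rewrite sat_rects_not IH.
- by rewrite sat_rects_and IH1 IH2.
- rewrite sat_rects_ex; split=> -[x Hx]; exists x.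
  + by move/(IH (upd v n x)): Hx; rewrite !comp_upd.
  + by apply/(IH (upd v n x)); rewrite !comp_upd.
Qed.

Lemma fv_rects_of S f : fv_in S f -> fv_rects S (rects_of f).
Proof.
elim: f S => [r ts|t1 t2|g IH|g1 IH1 g2 IH2|n g IH] S /=.
- case: r ts => [[p|p]|[]] ts /= Hts; do !split;
    by [left | apply/fv_term_map/Hts | move=> k; apply/fv_term_map/Hts].
- by case=> H1 H2; do !split; apply: fv_term_map.
- by move/IH/fv_rects_not.
- by case=> /IH1 H1 /IH2 H2; apply: fv_rects_and.
- by move/IH/fv_rects_ex.
Qed.

Lemma sat_iff_pair S v1 v2 w1 w2 :
  (forall phi, fv_in S phi -> (sat pe1 v1 phi <-> sat pe1 w1 phi)) ->
  (forall psi, fv_in S psi -> (sat pe2 v2 psi <-> sat pe2 w2 psi)) ->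
  forall f, fv_in S f ->
    (@sat LS Q N pe (fun m => (v1 m, v2 m)) f <->
     @sat LS Q N pe (fun m => (w1 m, w2 m)) f).
Proof.
move=> E1 E2 f Hf; rewrite !sat_rects_of.
exact: sat_rects_iff E1 E2 (fv_rects_of Hf).
Qed.

End ProductDecomposition.

Section SimpleProductOverA.

Variables (L1 L2 : language) (M1 : structure L1) (M2 : structure L2).
Local Notation N := (sim_product M1 M2).
Local Notation LS := (sim_language L1 L2).
Variable A : sdom N -> Prop.
Local Notation Q := {y : sdom N | A y}.
Local Notation Q1 := {x : sdom M1 | proj_set1 A x}.
Local Notation Q2 := {x : sdom M2 | proj_set2 A x}.

Definition proj_param1 (p : Q) : Q1 :=
  exist _ (proj1_sig p).1 (ex_intro _ (proj1_sig p) (conj (proj2_sig p) erefl)).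

Definition proj_param2 (p : Q) : Q2 :=
  exist _ (proj1_sig p).2 (ex_intro _ (proj1_sig p) (conj (proj2_sig p) erefl)).

Definition lift_param1 (p : Q1) : Q :=
  let: exist y Hy := constructive_indefinite_description _ (proj2_sig p) in
  exist _ y (proj1 Hy).

Definition lift_param2 (p : Q2) : Q :=
  let: exist y Hy := constructive_indefinite_description _ (proj2_sig p) in
  exist _ y (proj1 Hy).

Lemma lift_param1K p : (proj1_sig (lift_param1 p)).1 = proj1_sig p.
Proof. by rewrite /lift_param1; case: constructive_indefinite_description => y [_ ->]. Qed.

Lemma lift_param2K p : (proj1_sig (lift_param2 p)).2 = proj1_sig p.
Proof. by rewrite /lift_param2; case: constructive_indefinite_description => y [_ ->]. Qed.

Definition sim_eq (k : bool) (t1 t2 : term LS Q) : formula LS Q :=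
  @FRel LS Q (inr k) (fun i : 'I_2 => if val i == 0 then t1 else t2).

Lemma fv_sim_eq k S t1 t2 :
  term_fv_in S t1 -> term_fv_in S t2 -> fv_in S (sim_eq k t1 t2).
Proof. by move=> H1 H2 i /=; case: ifP. Qed.

Lemma indiscernible_fst (d2 : lcon L2) (I : Type) (lt : I -> I -> Prop)
    (c : I -> sdom N) :
  indiscernible N A lt c -> indiscernible M1 (proj_set1 A) lt (fst \o c).
Proof.
move=> Hc n i j Hi Hj.
apply: (sat_iff_interpret (M := M1) (N := N)
  (h := fst) (h' := fun x => (x, scon M2 d2))
  (fc := fun c1 : lcon L1 => (c1, d2) : lcon LS) (fp := lift_param1)
  (rel_def := fun r => @FRel LS Q (inl (inl r))) (eq_def := sim_eq true)
  _ _ _ _ _ _ _ (Hc n i j Hi Hj)) => //.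
- exact: lift_param1K.
- exact: fv_sim_eq.
Qed.

Lemma indiscernible_snd (d1 : lcon L1) (I : Type) (lt : I -> I -> Prop)
    (c : I -> sdom N) :
  indiscernible N A lt c -> indiscernible M2 (proj_set2 A) lt (snd \o c).
Proof.
move=> Hc n i j Hi Hj.
apply: (sat_iff_interpret (M := M2) (N := N)
  (h := snd) (h' := fun x => (scon M1 d1, x))
  (fc := fun c2 : lcon L2 => (d1, c2) : lcon LS) (fp := lift_param2)
  (rel_def := fun r => @FRel LS Q (inl (inr r))) (eq_def := sim_eq false)
  _ _ _ _ _ _ _ (Hc n i j Hi Hj)) => //.
- exact: lift_param2K.
- exact: fv_sim_eq.
Qed.

Lemma indiscernible_pair (I : Type) (lt : I -> I -> Prop)
    (a : I -> sdom M1) (b : I -> sdom M2) :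
  indiscernible M1 (proj_set1 A) lt a -> indiscernible M2 (proj_set2 A) lt b ->
  indiscernible N A lt (fun i => (a i, b i)).
Proof.
move=> Ha Hb n i j Hi Hj.
exact: (sat_iff_pair (q1 := proj_param1) (q2 := proj_param2) _ _
  (Ha n i j Hi Hj) (Hb n i j Hi Hj)).
Qed.

End SimpleProductOverA.

Theorem lemma3p4 (L1 L2 : language) (T1 : theory L1) (T2 : theory L2)
  (M1 : structure L1) (M2 : structure L2) :
  inhabited (lcon L1) -> inhabited (lcon L2) ->
  models M1 T1 -> models M2 T2 ->
  forall (A : sdom (sim_product M1 M2) -> Prop)
         (I : Type) (lt : I -> I -> Prop),
    strict_linear_order lt ->
    forall (a : I -> sdom M1) (b : I -> sdom M2),
      indiscernible (sim_product M1 M2) A lt (fun i => (a i, b i)) <->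
      (indiscernible M1 (proj_set1 A) lt a /\
       indiscernible M2 (proj_set2 A) lt b).
Proof.
move=> [d1] [d2] _ _ A I lt _ a b; split=> [Hab | [Ha Hb]].
- split; [exact: indiscernible_fst d2 _ _ _ Hab | exact: indiscernible_snd d1 _ _ _ Hab].
- exact: indiscernible_pair.
Qed.
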